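(* Under the hypotheses and notation of the context (in particular with $\xi_k^c,\eta_k^c$, $k=1,2$, as defined there), the Geronimus perturbed monic orthogonal polynomials satisfy $$[Q_n^{c,N}]''(x)+\mathcal R(x;n)[Q_n^{c,N}]'(x)+\mathcal S(x;n)Q_n^{c,N}(x)=0,$$ where $$\mathcal R(x;n)=-\Big(\xi_1^c(x;n)+\eta_2^c(x;n)+\frac{[\eta_1^c(x;n)]'}{\eta_1^c(x;n)}\Big),$$ $$\mathcal S(x;n)=\xi_1^c(x;n)\eta_2^c(x;n)-\eta_1^c(x;n)\xi_2^c(x;n)+\frac{\xi_1^c(x;n)[\eta_1^c(x;n)]'-[\xi_1^c(x;n)]'\eta_1^c(x;n)}{\eta_1^c(x;n)}.$$
   Context: $\mu$ is a positive Borel measure on $\mathbb{R}$, absolutely continuous w.r.t. Lebesgue measure, with finite moments, supported on a set $E$ with infinitely many points; $c\in\mathbb{R}\setminus E$, $N>0$. $\mu$ is (semi-)classical: its monic orthogonal polynomials $P_n$ satisfy $xP_n=P_{n+1}+\beta_nP_n+\gamma_nP_{n-1}$ and $\sigma(x)P_n'=a(x;n)P_n+b(x;n)P_{n-1}$ with polynomials $\sigma,a,b$ of degrees independent of $n$. $\{Q_n^c\}$ is the MOPS for $\int fg\frac{1}{x-c}d\mu$; $\{Q_n^{c,N}\}$ is the MOPS for $\int fg\frac{1}{x-c}d\mu+Nf(c)g(c)$. $\Lambda_n^c=\frac{\pi_{n-1}-r_{n-1}}{1+NB_n^c}-\pi_{n-1}$ with $\pi_{n-1}=P_n(c)/P_{n-1}(c)$,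 $r_{n-1}=F_n(c)/F_{n-1}(c)$, $F_n(s)=\int\frac{P_n(x)}{x-s}d\mu(x)$, $F_{-1}=1$, $B_n^c=\frac{-Q_n^c(c)P_{n-1}(c)}{\int P_{n-1}^2d\mu}$. Define $B_2=\Lambda_{n-1}^c\big(\frac{1}{\Lambda_{n-1}^c}+\frac{x-\beta_{n-1}}{\gamma_{n-1}}\big)$, $\Delta=B_2+\frac{\Lambda_n^c\Lambda_{n-1}^c}{\gamma_{n-1}}$, $C_1=\frac{1}{\sigma}\big(a(x;n)-\Lambda_n^c\frac{b(x;n-1)}{\gamma_{n-1}}\big)$, $D_1=\frac1\sigma\big(b(x;n)+\Lambda_n^cb(x;n-1)\big(\frac{a(x;n-1)}{b(x;n-1)}+\frac{x-\beta_{n-1}}{\gamma_{n-1}}\big)\big)$, $C_2=\frac{-\Lambda_{n-1}^c}{\sigma}\big(\frac{a(x;n)}{\gamma_{n-1}}+\frac{b(x;n-1)}{\gamma_{n-1}}\big(\frac{1}{\Lambda_{n-1}^c}+\frac{x-\beta_{n-1}}{\gamma_{n-1}}\big)\big)$, $D_2=\frac{\Lambda_{n-1}^c}{\sigma}\big[\frac{\sigma-b(x;n)}{\gamma_{n-1}}+b(x;n-1)\big(\frac{a(x;n-1)}{b(x;n-1)}+\frac{x-\beta_{n-1}}{\gamma_{n-1}}\big)\big(\frac{1}{\Lambda_{n-1}^c}+\frac{x-\beta_{n-1}}{\gamma_{n-1}}\big)\big]$, and for $k=1,2$: $\xi_k^c=\frac{C_kB_2\gamma_{n-1}+D_k\Lambda_{n-1}^c}{\Delta\gamma_{n-1}}$,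 $\eta_k^c=\frac{D_k-C_k\Lambda_n^c}{\Delta}$ (all functions of $x$ and $n$). The statement concerns indices $n$ for which all quantities are defined. *)

From HB Require Import structures.
From mathcomp Require Import all_boot all_order all_algebra.
From mathcomp Require Import all_classical all_reals all_analysis.
Set Implicit Arguments. Unset Strict Implicit. Unset Printing Implicit Defensive.
Import Order.TTheory GRing.Theory Num.Theory.
Import numFieldNormedType.Exports.
Local Open Scope classical_set_scope.
Local Open Scope ring_scope.

Section Geronimus.
Variable R : realType.
Variable mu : {measure set (measurableTypeR R) -> \bar R}.

Definition ip (f : R -> R) : R := \int[mu]_(t in setT) f t.

Definition msupport : set R :=
  [set x : R | forall e : R, 0 < e -> (0 < mu `](x - e)%R, (x + e)%R[%classic)%E].

Definition mu_form (p q : {poly R}) : R := ip (fun t => p.[t] * q.[t]).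
Definition geron_form (c : R) (p q : {poly R}) : R :=
  ip (fun t => p.[t] * q.[t] / (t - c)).
Definition geronN_form (c N : R) (p q : {poly R}) : R :=
  geron_form c p q + N * p.[c] * q.[c].

Definition Fst (P : nat -> {poly R}) (n : nat) (s : R) : R :=
  ip (fun t => (P n).[t] / (t - s)).

End Geronimus.

Definition is_MOPS (R : ringType) (B : {poly R} -> {poly R} -> R)
  (Q : nat -> {poly R}) : Prop :=
  forall n, [/\ Q n \is monic, size (Q n) = n.+1,
             (forall m, m <> n -> B (Q n) (Q m) = 0) & B (Q n) (Q n) <> 0].

Definition Pprev (R : ringType) (P : nat -> {poly R}) (n : nat) : {poly R} :=
  if n is m.+1 then P m else 0.

Section Quantities.
Variable R : realType.
Variable mu : {measure set (measurableTypeR R) -> \bar R}.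
Variables (P Qc : nat -> {poly R}) (beta gamma : nat -> R) (sig : {poly R})
          (a b : nat -> {poly R}) (c N : R).

Definition piC (k : nat) : R := (P k.+1).[c] / (P k).[c].
Definition rC (k : nat) : R := Fst mu P k.+1 c / Fst mu P k c.
Definition Bc (k : nat) : R :=
  - (Qc k).[c] * (P k.-1).[c] / mu_form mu (P k.-1) (P k.-1).
Definition Lam (k : nat) : R :=
  (piC k.-1 - rC k.-1) / (1 + N * Bc k) - piC k.-1.

Variable n : nat.
Let Ln := Lam n.
Let Lm := Lam n.-1.
Let bet := beta n.-1.
Let gam := gamma n.-1.

Definition B2f (x : R) : R := Lm * (1 / Lm + (x - bet) / gam).
Definition Deltaf (x : R) : R := B2f x + Ln * Lm / gam.
Definition C1f (x : R) : R :=
  1 / sig.[x] * ((a n).[x] - Ln * (b n.-1).[x] / gam).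
Definition D1f (x : R) : R :=
  1 / sig.[x] * ((b n).[x] + Ln * (b n.-1).[x] *
     ((a n.-1).[x] / (b n.-1).[x] + (x - bet) / gam)).
Definition C2f (x : R) : R :=
  - Lm / sig.[x] * ((a n).[x] / gam +
     (b n.-1).[x] / gam * (1 / Lm + (x - bet) / gam)).
Definition D2f (x : R) : R :=
  Lm / sig.[x] * ((sig.[x] - (b n).[x]) / gam +
     (b n.-1).[x] * ((a n.-1).[x] / (b n.-1).[x] + (x - bet) / gam) *
     (1 / Lm + (x - bet) / gam)).
Definition xi1 (x : R) : R := (C1f x * B2f x * gam + D1f x * Lm) / (Deltaf x * gam).
Definition xi2 (x : R) : R := (C2f x * B2f x * gam + D2f x * Lm) / (Deltaf x * gam).
Definition eta1 (x : R) : R := (D1f x - C1f x * Ln) / Deltaf x.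
Definition eta2 (x : R) : R := (D2f x - C2f x * Ln) / Deltaf x.

Definition RRf (x : R) : R :=
  - (xi1 x + eta2 x + derive1 eta1 x / eta1 x).
Definition SSf (x : R) : R :=
  xi1 x * eta2 x - eta1 x * xi2 x +
  (xi1 x * derive1 eta1 x - derive1 xi1 x * eta1 x) / eta1 x.

End Quantities.

From HB Require Import structures.
From mathcomp Require Import all_boot all_order all_algebra.
From mathcomp Require Import all_classical all_reals all_analysis.
From mathcomp Require Import measurable_realfun.
From mathcomp Require Import ring zify.
Import Order.TTheory GRing.Theory Num.Theory.
Import numFieldNormedType.Exports.
Local Open Scope classical_set_scope.
Local Open Scope ring_scope.
Set Implicit Arguments. Unset Strict Implicit. Unset Printing Implicit Defensive.

(* Since c lies outside the support, mu vanishes near c, so both Geronimus forms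
   are of the form (p, q) |-> L (p q) for linear functionals L with
   L ((X - c) r) = \int r dmu.  Hence Q_n^{c,N} is mu-orthogonal to all
   polynomials of degree < n - 1, i.e. Q_n^{c,N} = P_n + Lambda P_{n-1}, and
   Lambda = Lambda_n^c follows from Q_n^c ⊥ 1, Q_n^{c,N} ⊥ 1 and the identity
   P_k(c) F_{k+1}(c) - P_{k+1}(c) F_k(c) = ||P_k||^2.  The structure relation and
   the recurrence then turn this into the ladder relations
   [Q_n]' = xi_1 Q_n + eta_1 Q_{n-1} and [Q_{n-1}]' = xi_2 Q_n + eta_2 Q_{n-1}
   near x; differentiating the first and eliminating Q_{n-1} with the second
   gives the differential equation. *)

Lemma size_subZ_monic (R : nzRingType) (D Q : {poly R}) m :
  (size D <= m.+1)%N -> Q \is monic -> size Q = m.+1 ->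
  (size (D - D`_m *: Q)%R <= m)%N.
Proof.
move=> sD mQ sQ; apply/leq_sizeP => i Hi; rewrite coefB coefZ.
have [->|ne_im] := eqVneq i m.
  by move/monicP: mQ; rewrite lead_coefE sQ /= => ->; rewrite mulr1 subrr.
have lt_mi : (m < i)%N by rewrite ltn_neqAle eq_sym ne_im Hi.
rewrite (nth_default 0 (leq_trans sD lt_mi)).
by rewrite (nth_default 0 (_ : (size Q <= i)%N)) ?sQ // mulr0 subrr.
Qed.

Section MOPSBilinear.
Variable R : fieldType.
Variable B : {poly R} -> {poly R} -> R.
Hypothesis BD : forall p q r, B p (q + r) = B p q + B p r.
Hypothesis BZ : forall p k q, B p (k *: q) = k * B p q.
Variable Q : nat -> {poly R}.
Hypothesis HQ : is_MOPS B Q.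

Lemma MOPS_orthogonal_lower k (g : {poly R}) : (size g <= k)%N -> B (Q k) g = 0.
Proof.
have [_ _ oQk _] := HQ k.
suff ortho s : (s <= k)%N -> forall g : {poly R}, (size g <= s)%N -> B (Q k) g = 0
  by exact: ortho.
elim: s => [|s IHs] le_sk {}g sg.
  by move: sg; rewrite leqn0 size_poly_eq0 => /eqP ->; rewrite -(scale0r 0) BZ mul0r.
have [mQ sQ _ _] := HQ s.
rewrite -(subrK (g`_s *: Q s) g) BD BZ oQk => [|/eqP]; last by rewrite ltn_eqF.
by rewrite mulr0 addr0 IHs ?(ltnW le_sk) ?size_subZ_monic.
Qed.

Hypothesis Bsym : forall p q, B p q = B q p.

Lemma MOPS_nondegenerate (S : {poly R}) m : (size S <= m)%N ->
  (forall h : {poly R}, (size h <= m)%N -> B S h = 0) -> S = 0.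
Proof.
move=> sS orthoS; apply/eqP; apply: contraT => S_neq0.
have sSd : size S = (size S).-1.+1 by rewrite prednK ?size_poly_gt0.
set d := (size S).-1 in sSd.
have [mQ sQ _ nQ] := HQ d.
have : B (Q d) S = S`_d * B (Q d) (Q d).
  rewrite -{1}(subrK (S`_d *: Q d) S) BD BZ MOPS_orthogonal_lower ?add0r //.
  exact: size_subZ_monic (eq_leq sSd) mQ sQ.
rewrite -Bsym orthoS ?sQ -?sSd // => /esym/eqP; rewrite mulf_eq0 => /orP[|/eqP//].
by rewrite -[S`_d]/(nth 0 S (size S).-1) -lead_coefE lead_coef_eq0 (negbTE S_neq0).
Qed.

Lemma MOPS_quasi_orthogonal k (T : {poly R}) : (0 < k)%N ->
  T \is monic -> size T = k.+1 ->
  (forall h : {poly R}, (size h <= k.-1)%N -> B T h = 0) ->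
  T = Q k + (T - Q k)`_k.-1 *: Q k.-1.
Proof.
move=> k_gt0 mT sT orthoT.
have [mQk sQk _ _] := HQ k; have [mQk1 sQk1 _ _] := HQ k.-1.
have sD : (size (T - Q k)%R <= k.-1.+1)%N.
  rewrite prednK // -[Q k](scale1r) -[1](monicP mT) lead_coefE sT.
  exact: size_subZ_monic (eq_leq sT) mQk sQk.
apply/eqP; rewrite -subr_eq0 opprD addrA; apply/eqP.
apply: (MOPS_nondegenerate (size_subZ_monic sD mQk1 sQk1)) => h sh.
rewrite Bsym !BD -!scaleN1r !BZ !(Bsym h) orthoT ?MOPS_orthogonal_lower //.
  by rewrite !mulr0 !addr0.
by rewrite (leq_trans sh) // leq_pred.
Qed.
End MOPSBilinear.

Section PolyFunctionals.
Variable R : comNzRingType.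
Variable L : {poly R} -> R.
Hypothesis LD : forall p q, L (p + q) = L p + L q.
Hypothesis LZ : forall k p, L (k *: p) = k * L p.

Lemma functional_mulDr p q r : L (p * (q + r)) = L (p * q) + L (p * r).
Proof. by rewrite mulrDr LD. Qed.

Lemma functional_mulZr p k q : L (p * (k *: q)) = k * L (p * q).
Proof. by rewrite -scalerAr LZ. Qed.

Lemma functionalB p q : L (p - q) = L p - L q.
Proof. by rewrite LD -scaleN1r LZ mulN1r. Qed.
End PolyFunctionals.

Section GeronimusAlgebra.
Variable R : fieldType.
Variables (L0 : {poly R} -> R) (c : R).
Hypothesis L0D : forall p q, L0 (p + q) = L0 p + L0 q.
Hypothesis L0Z : forall k p, L0 (k *: p) = k * L0 p.
Variable P : nat -> {poly R}.
Hypothesis HP : is_MOPS (fun p q => L0 (p * q)) P.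

Lemma Geronimus_decomposition (L : {poly R} -> R) (Q : nat -> {poly R}) k :
  (forall p q, L (p + q) = L p + L q) -> (forall a p, L (a *: p) = a * L p) ->
  (forall r, L (('X - c%:P) * r) = L0 r) ->
  is_MOPS (fun p q => L (p * q)) Q -> (0 < k)%N ->
  exists kap, Q k = P k + kap *: P k.-1 /\ L (P k) + kap * L (P k.-1) = 0.
Proof.
move=> LD LZ L_XsubC HQ k_gt0; have [mQ sQ _ _] := HQ k.
have orthoQ := MOPS_orthogonal_lower (functional_mulDr LD) (functional_mulZr LZ) HQ.
have QE : Q k = P k + (Q k - P k)`_k.-1 *: P k.-1.
  apply: (MOPS_quasi_orthogonal (functional_mulDr L0D) (functional_mulZr L0Z) HP)
    => // [p q|h sh]; first by rewrite mulrC.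
  rewrite -L_XsubC mulrCA; apply: orthoQ.
  by rewrite (leq_trans (size_polyMleq _ _)) // size_XsubC -(prednK k_gt0).
exists (Q k - P k)`_k.-1; split=> //.
have := orthoQ k 1; rewrite size_poly1 mulr1 => /(_ k_gt0).
by rewrite {1}QE LD LZ.
Qed.

Variables (beta gamma : nat -> R).
Hypothesis Hrec : forall k, 'X * P k = P k.+1 + beta k *: P k + gamma k *: Pprev P k.

Lemma MOPS_orthogonal k m : k <> m -> L0 (P k * P m) = 0.
Proof. by move/nesym; have [_ _ oP _] := HP k; exact: oP. Qed.

Lemma MOPS_first : P 0 = 1.
Proof.
have [mP sP _ _] := HP 0.
rewrite (size1_polyC (eq_leq sP)); congr (_%:P).
by move/monicP: mP; rewrite lead_coefE sP.
Qed.

Lemma MOPS_norm_rec k : L0 (P k.+1 * P k.+1) = gamma k.+1 * L0 (P k * P k).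
Proof.
have E : L0 (('X * P k.+1) * P k) = L0 (P k.+1 * ('X * P k)) by rewrite mulrCA mulrA.
have o21 : L0 (P k.+2 * P k) = 0 by apply: MOPS_orthogonal; lia.
have o10 : L0 (P k.+1 * P k) = 0 by apply: MOPS_orthogonal; lia.
have o1prev : L0 (P k.+1 * Pprev P k) = 0.
  have oPk1 := MOPS_orthogonal_lower (functional_mulDr L0D) (functional_mulZr L0Z) HP.
  by apply: oPk1; case: (k) => [|j] /=; [rewrite size_poly0|have [_ -> _ _] := HP j].
rewrite !Hrec /= mulrDl mulrDl mulrDr mulrDr !L0D in E.
rewrite -!scalerAl -!scalerAr !L0Z o21 o10 o1prev !mulr0 !add0r !addr0 in E.
by rewrite E.
Qed.

Lemma MOPS_orthogonal_1 k : L0 (P k.+1) = 0.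
Proof.
rewrite -[P k.+1]mulr1.
by apply: (MOPS_orthogonal_lower (functional_mulDr L0D) (functional_mulZr L0Z) HP);
  rewrite size_poly1.
Qed.

Variable L : {poly R} -> R.
Hypothesis LD : forall p q, L (p + q) = L p + L q.
Hypothesis LZ : forall k p, L (k *: p) = k * L p.
Hypothesis L_XsubC : forall r, L (('X - c%:P) * r) = L0 r.

Lemma recurrence_at_c k :
  P k.+1 = ('X - c%:P) * P k + (c - beta k) *: P k - gamma k *: Pprev P k.
Proof.
have := Hrec k; rewrite -!mul_polyC polyCB !mulrBl => ->; ring.
Qed.

Lemma functional_rec k :
  L (P k.+1) = L0 (P k) + (c - beta k) * L (P k) - gamma k * L (Pprev P k).
Proof. by rewrite {1}recurrence_at_c (functionalB LD LZ) LD !LZ L_XsubC. Qed.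

Lemma horner_rec k :
  (P k.+1).[c] = (c - beta k) * (P k).[c] - gamma k * (Pprev P k).[c].
Proof. by rewrite {1}recurrence_at_c !hornerE subrr mul0r add0r. Qed.

Lemma wronskian_at_c k :
  (P k).[c] * L (P k.+1) - (P k.+1).[c] * L (P k) = L0 (P k * P k).
Proof.
elim: k => [|k IHk].
  have L_0 : L 0 = 0 by rewrite -(scale0r 0) LZ mul0r.
  rewrite functional_rec horner_rec /= L_0 horner0 MOPS_first hornerC mulr1.
  by rewrite mul1r !mulr0 !subr0 mulr1 addrK.
rewrite (functional_rec k.+1) (horner_rec k.+1) /= MOPS_orthogonal_1 MOPS_norm_rec -IHk.
by ring.
Qed.
End GeronimusAlgebra.

Section IntegralsAwayFromC.
Variable R : realType.
Variable mu : {measure set (measurableTypeR R) -> \bar R}.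
Variables (c e : R).
Hypothesis moments : forall k : nat, mu.-integrable setT (fun t : R => (t ^+ k)%:E).
Hypothesis e_gt0 : 0 < e.
Hypothesis mu_ball0 : mu `](c - e), (c + e)[%classic = 0%E.

Lemma measurable_horner (p : {poly R}) :
  measurable_fun (setT : set (measurableTypeR R)) (horner p).
Proof. exact: continuous_measurable_fun (@continuous_horner R p). Qed.

Lemma integrable_horner (p : {poly R}) : mu.-integrable setT (EFin \o horner p).
Proof.
have -> : EFin \o horner p = (fun t => \sum_(i < size p) ((p`_i)%:E * (t ^+ i)%:E)%E).
  apply/funext => t /=; rewrite horner_coef -sumEFin.
  by apply: eq_bigr => i _; rewrite EFinM.
by apply: integrable_sum => // i _; exact: integrableZl.
Qed.

Lemma measurable_horner_divXsubC (p : {poly R}) :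
  measurable_fun (setT : set (measurableTypeR R)) (fun t => p.[t] / (t - c)).
Proof.
rewrite -(setvU [set c]).
apply/measurable_funU; [|exact: measurable_set1|split].
- by apply: measurableC; exact: measurable_set1.
- apply: open_continuous_measurable_fun.
    by rewrite openC; apply/accessible_closed_set1/hausdorff_accessible/Rhausdorff.
  move=> t; rewrite inE /= => /eqP tc.
  apply/differentiable_continuous/derivable1_diffP/derivableM.
    exact: derivable_horner.
  apply: derivableV; first by rewrite subr_eq0.
  exact/derivableB/derivable_cst/derivable_id.
- move=> _ Y mY.
  have [Yc|Yc] := pselect (Y (p.[c] / (c - c))).
    rewrite (_ : _ `&` _ = [set c]); first exact: measurable_set1.
    by apply/seteqP; split => [t [->]//|t ->]; split.
  rewrite (_ : _ `&` _ = set0) //.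
  by apply/seteqP; split => [t [/= ->]//|t].
Qed.

Lemma integrable_horner_divXsubC (p : {poly R}) :
  mu.-integrable setT (EFin \o (fun t => p.[t] / (t - c))).
Proof.
have mf : measurable_fun setT (EFin \o (fun t => p.[t] / (t - c))).
  by apply/measurable_EFinP; exact: measurable_horner_divXsubC.
have mball : measurable (`](c - e), (c + e)[%classic : set (measurableTypeR R)).
  exact: measurable_itv.
rewrite (negligible_integrable mball measurableT mf mu_ball0).
have mD : measurable (setT `\` `](c - e), (c + e)[%classic : set (measurableTypeR R)).
  exact: measurableD.
apply: (le_integrable (g := fun t => ((e^-1)%:E * (p.[t])%:E)%E) mD).
- exact: measurable_funS mf.
- move=> t [_ t_ball] /=.
  have le_e : e <= `|t - c|.
    by rewrite leNgt; apply/negP => ?; apply: t_ball; rewrite /= in_itv /= -ltr_distl.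
  rewrite lee_fin !normrM normfV [`|e^-1|]ger0_norm ?invr_ge0 ?(ltW e_gt0) // mulrC.
  by rewrite ler_wpM2r // lef_pV2 ?posrE // (lt_le_trans e_gt0).
- exact/(integrableS measurableT)/integrableZl/integrable_horner.
Qed.

Definition Imu (p : {poly R}) : R := ip mu (horner p).
Definition Imuc (p : {poly R}) : R := ip mu (fun t => p.[t] / (t - c)).

Lemma ImuD p q : Imu (p + q) = Imu p + Imu q.
Proof.
rewrite /Imu /ip (_ : horner (p + q) = horner p \+ horner q); last first.
  by apply/funext => t; rewrite hornerD.
by rewrite RintegralD //; exact: integrable_horner.
Qed.

Lemma ImuZ k p : Imu (k *: p) = k * Imu p.
Proof.
rewrite /Imu /ip (_ : horner (k *: p) = fun t => k * p.[t]); last first.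
  by apply/funext => t; rewrite hornerZ.
by rewrite RintegralZl //; exact: integrable_horner.
Qed.

Lemma ImucD p q : Imuc (p + q) = Imuc p + Imuc q.
Proof.
rewrite /Imuc /ip (_ : (fun t => (p + q).[t] / (t - c)) =
  (fun t => p.[t] / (t - c)) \+ (fun t => q.[t] / (t - c))); last first.
  by apply/funext => t; rewrite hornerD mulrDl.
by rewrite RintegralD //; exact: integrable_horner_divXsubC.
Qed.

Lemma ImucZ k p : Imuc (k *: p) = k * Imuc p.
Proof.
rewrite /Imuc /ip (_ : (fun t => (k *: p).[t] / (t - c)) =
  (fun t => k * (p.[t] / (t - c)))); last first.
  by apply/funext => t; rewrite hornerZ mulrA.
by rewrite RintegralZl //; exact: integrable_horner_divXsubC.
Qed.

Lemma Imuc_mulXsubC p : Imuc (('X - c%:P) * p) = Imu p.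
Proof.
rewrite /Imuc /Imu /ip /Rintegral; congr fine.
apply: ae_eq_integral => //.
- by apply/measurable_EFinP; exact: measurable_horner_divXsubC.
- by apply/measurable_EFinP; exact: measurable_horner.
exists `](c - e), (c + e)[%classic; split => // t /= ne_t.
have [tc|tc] := eqVneq t c.
  by rewrite /= in_itv /= tc gtrBl ltrDl e_gt0.
exfalso; apply: ne_t => _; congr (_%:E).
by rewrite hornerM hornerXsubC mulrAC divff ?mul1r // subr_eq0.
Qed.
End IntegralsAwayFromC.

(* With [(p0, p1) = (P_j(c), P_{j+1}(c))], [(f0, f1) = (F_j(c), F_{j+1}(c))] and
   [n2 = ||P_j||^2], the hypotheses are [Q_{j+1}^c ⊥ 1], the Wronskian identity
   and [Q_{j+1}^{c,N} ⊥ 1], and [kap], [lam] are the coefficients of [P_j] in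
   [Q_{j+1}^c] and [Q_{j+1}^{c,N}]. *)
Lemma Geronimus_parameter (F : fieldType) (p0 p1 f0 f1 n2 kap lam N : F) :
  p0 != 0 -> f0 != 0 -> n2 != 0 ->
  f1 + kap * f0 = 0 -> p0 * f1 - p1 * f0 = n2 ->
  f1 + N * p1 + lam * (f0 + N * p0) = 0 ->
  1 + N * (- (p1 + kap * p0) * p0 / n2) != 0 ->
  lam = (p1 / p0 - f1 / f0) / (1 + N * (- (p1 + kap * p0) * p0 / n2)) - p1 / p0.
Proof.
move=> p0_neq0 f0_neq0 n2_neq0 kapE wronskian lamE.
have -> : - (p1 + kap * p0) * p0 / n2 = p0 / f0.
  have -> : kap = - f1 / f0 by rewrite -[- f1]addr0 -kapE addKr mulfK.
  by rewrite -wronskian; field; rewrite f0_neq0 wronskian.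
move=> den_neq0; have D_neq0 : f0 + N * p0 != 0.
  apply: contra den_neq0 => /eqP D0; apply/eqP.
  by rewrite -[1](divff f0_neq0) mulrA -mulrDl D0 mul0r.
have -> : lam = - (f1 + N * p1) / (f0 + N * p0).
  rewrite -[lam](mulfK D_neq0); congr (_ / _).
  by rewrite -[RHS]sub0r -lamE; ring.
by field; rewrite p0_neq0 f0_neq0 D_neq0.
Qed.

Section GeronimusKernel.
Variable R : realType.
Variable mu : {measure set (measurableTypeR R) -> \bar R}.
Variables (c e N : R) (P Qc QcN : nat -> {poly R}) (beta gamma : nat -> R).
Hypothesis moments : forall k : nat, mu.-integrable setT (fun t : R => (t ^+ k)%:E).
Hypothesis e_gt0 : 0 < e.
Hypothesis mu_ball0 : mu `](c - e), (c + e)[%classic = 0%E.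
Hypothesis HP : is_MOPS (mu_form mu) P.
Hypothesis Hrec : forall k, 'X * P k = P k.+1 + beta k *: P k + gamma k *: Pprev P k.
Hypothesis HQc : is_MOPS (geron_form mu c) Qc.
Hypothesis HQcN : is_MOPS (geronN_form mu c N) QcN.

Let ImuD := ImuD moments.
Let ImuZ := ImuZ moments.
Let ImucD := ImucD moments e_gt0 mu_ball0.
Let ImucZ := ImucZ moments e_gt0 mu_ball0.
Let Imuc_mulXsubC := Imuc_mulXsubC e_gt0 mu_ball0.

Lemma mu_formE : mu_form mu = fun p q => Imu mu (p * q).
Proof.
by apply/funext => p; apply/funext => q; congr ip; apply/funext => t; rewrite hornerM.
Qed.

Lemma geron_formE : geron_form mu c = fun p q => Imuc mu c (p * q).
Proof.
by apply/funext => p; apply/funext => q; congr ip; apply/funext => t; rewrite hornerM.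
Qed.

Lemma geronN_formE :
  geronN_form mu c N = fun p q => Imuc mu c (p * q) + N * (p * q).[c].
Proof.
apply/funext => p; apply/funext => q.
by rewrite /geronN_form geron_formE hornerM mulrA.
Qed.

Lemma QcN_kernel_form j : (P j).[c] != 0 -> Imuc mu c (P j) != 0 ->
  1 + N * Bc mu P Qc c j.+1 != 0 ->
  QcN j.+1 = P j.+1 + Lam mu P Qc c N j.+1 *: P j.
Proof.
move=> p0_neq0 f0_neq0.
have HP0 := HP; rewrite mu_formE in HP0.
have HQc1 := HQc; rewrite geron_formE in HQc1.
have HQcN1 := HQcN; rewrite geronN_formE in HQcN1.
have [kap [QcE kapE]] :=
  Geronimus_decomposition ImuD ImuZ HP0 ImucD ImucZ Imuc_mulXsubC HQc1 (ltn0Sn j).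
pose LN r := Imuc mu c r + N * r.[c].
have LND p q : LN (p + q) = LN p + LN q by rewrite /LN ImucD hornerD; ring.
have LNZ a p : LN (a *: p) = a * LN p by rewrite /LN ImucZ hornerZ; ring.
have LN_mulXsubC r : LN (('X - c%:P) * r) = Imu mu r.
  by rewrite /LN Imuc_mulXsubC hornerM hornerXsubC subrr mul0r mulr0 addr0.
have [lam [QcNE lamE]] :=
  Geronimus_decomposition ImuD ImuZ HP0 LND LNZ LN_mulXsubC HQcN1 (ltn0Sn j).
have [_ _ _ n2_neq0] := HP0 j.
rewrite QcNE /Lam /piC /rC /Bc mu_formE /= QcE hornerD hornerZ /=
  => den_neq0; congr (_ + _ *: _).
apply: Geronimus_parameter => //; first exact/eqP.
exact: (wronskian_at_c ImuD ImuZ HP0 Hrec ImucD ImucZ Imuc_mulXsubC).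
Qed.
End GeronimusKernel.

Section SecondOrder.
Variable R : realType.

Lemma derive1_horner (p : {poly R}) x : derive1 (horner p) x = (deriv p).[x].
Proof. by rewrite derivE. Qed.

Lemma ladder_second_order (p q : {poly R}) (A B C D : R -> R) x :
  derivable A x 1 -> derivable B x 1 -> B x != 0 ->
  (\forall y \near x, (deriv p).[y] = A y * p.[y] + B y * q.[y]) ->
  (deriv q).[x] = C x * p.[x] + D x * q.[x] ->
  (deriv (deriv p)).[x]
    + - (A x + D x + derive1 B x / B x) * (deriv p).[x]
    + (A x * D x - B x * C x + (A x * derive1 B x - derive1 A x * B x) / B x) * p.[x]
  = 0.
Proof.
move=> dA dB B_neq0 ladder_p ladder_q.
have dp : derivable (horner p) x 1 by exact: derivable_horner.
have dq : derivable (horner q) x 1 by exact: derivable_horner.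
have E : (deriv (deriv p)).[x] = derive1 (A * horner p + B * horner q) x.
  rewrite -derive1_horner !derive1E; apply: near_eq_derive.
  by apply: filterS ladder_p => y.
rewrite E derive1E (deriveD (derivableM dA dp) (derivableM dB dq)).
rewrite (deriveM dA dp) (deriveM dB dq) -!derive1E !derive1_horner.
have scaleE (u v : R) : u *: v = u * v by [].
rewrite !scaleE ladder_q (nbhs_singleton ladder_p).
by field.
Qed.
End SecondOrder.

Ltac derivable_rational :=
  repeat lazymatch goal with
  | |- derivable (fun _ => ?k) _ _ => exact: derivable_cst
  | |- derivable (fun y => y) _ _ => exact: derivable_id
  | |- derivable (fun y => horner ?p y) _ _ => exact: derivable_horner
  | |- derivable (fun y => @?f y + @?g y) _ _ => apply: (derivableD (f := f) (g := g))
  | |- derivable (fun y => @?f y * @?g y) _ _ => apply: (derivableM (f := f) (g := g))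
  | |- derivable (fun y => - @?f y) _ _ => apply: (derivableN (f := f))
  | |- derivable (fun y => (@?f y)^-1) _ _ => apply: (derivableV (f := f))
  | |- derivable _ _ _ => assumption
  end.

Section Derivability.
Variable R : realType.
Variable mu : {measure set (measurableTypeR R) -> \bar R}.
Variables (P Qc : nat -> {poly R}) (beta gamma : nat -> R) (sig : {poly R})
  (a b : nat -> {poly R}) (c N : R) (n : nat) (x : R).

Lemma derivable_Deltaf : derivable (Deltaf mu P Qc beta gamma c N n) x 1.
Proof. by rewrite /Deltaf /B2f; derivable_rational. Qed.

Hypothesis sig_neq0 : sig.[x] != 0.
Hypothesis b_neq0 : (b n.-1).[x] != 0.
Hypothesis Delta_neq0 : Deltaf mu P Qc beta gamma c N n x != 0.
Hypothesis gamma_neq0 : gamma n.-1 != 0.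

Lemma derivable_xi1 : derivable (xi1 mu P Qc beta gamma sig a b c N n) x 1.
Proof.
have := derivable_Deltaf.
rewrite /xi1 /C1f /D1f /B2f => dDelta; derivable_rational => //.
by rewrite mulf_neq0.
Qed.

Lemma derivable_eta1 : derivable (eta1 mu P Qc beta gamma sig a b c N n) x 1.
Proof.
have := derivable_Deltaf.
by rewrite /eta1 /C1f /D1f => dDelta; derivable_rational.
Qed.
End Derivability.

Lemma near_neq0 (R : realType) (f : R -> R) x :
  derivable f x 1 -> f x != 0 -> \forall y \near x, f y != 0.
Proof.
move=> df fx_neq0.
have cf : {for x, continuous f}.
  by apply: differentiable_continuous; apply/derivable1_diffP.
apply: (cf [set z | z != 0]); exists `|f x|; first by rewrite /= normr_gt0.
by move=> z /= hz; apply/eqP => z0; move: hz; rewrite z0 subr0 ltxx.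
Qed.

Section Ladder.
Variable R : realType.
Variable mu : {measure set (measurableTypeR R) -> \bar R}.
Variables (P Qc QcN : nat -> {poly R}) (beta gamma : nat -> R) (sig : {poly R})
  (a b : nat -> {poly R}) (c N : R) (m : nat).
Hypothesis Hstr : forall k, sig * deriv (P k) = a k * P k + b k * Pprev P k.
Hypothesis Hrec : forall k, 'X * P k = P k.+1 + beta k *: P k + gamma k *: Pprev P k.
Hypothesis QcN_m2 : QcN m.+2 = P m.+2 + Lam mu P Qc c N m.+2 *: P m.+1.
Hypothesis QcN_m1 : QcN m.+1 = P m.+1 + Lam mu P Qc c N m.+1 *: P m.
Hypothesis gamma_neq0 : gamma m.+1 != 0.
Hypothesis Lam_neq0 : Lam mu P Qc c N m.+1 != 0.

Lemma structure_relation_at k y : sig.[y] != 0 ->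
  (deriv (P k)).[y] = ((a k).[y] * (P k).[y] + (b k).[y] * (Pprev P k).[y]) / sig.[y].
Proof.
by move=> s_neq0; rewrite -!hornerM -hornerD -Hstr hornerM mulrAC divff ?mul1r.
Qed.

Lemma recurrence_prev_at y :
  (P m).[y] = (y * (P m.+1).[y] - (P m.+2).[y] - beta m.+1 * (P m.+1).[y]) / gamma m.+1.
Proof.
have := congr1 (horner^~ y) (Hrec m.+1); rewrite /= !hornerE => ->.
by field.
Qed.

Lemma recurrence_prev_deriv_at y :
  (deriv (P m)).[y] = ((P m.+1).[y] + y * (deriv (P m.+1)).[y]
    - (deriv (P m.+2)).[y] - beta m.+1 * (deriv (P m.+1)).[y]) / gamma m.+1.
Proof.
have := congr1 (fun p => (deriv p).[y]) (Hrec m.+1).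
rewrite /= derivM derivX !derivD !derivZ !hornerE => ->.
by field.
Qed.

Let Ln := Lam mu P Qc c N m.+2.
Let Lm := Lam mu P Qc c N m.+1.

Lemma Deltaf_numerator_neq0 y : Deltaf mu P Qc beta gamma c N m.+2 y != 0 ->
  gamma m.+1 + (y - beta m.+1) * Lm + Ln * Lm != 0.
Proof.
apply: contra => /eqP D0; apply/eqP; rewrite /Deltaf /B2f /=.
rewrite -[RHS](mul0r (gamma m.+1)^-1) -D0 -/Ln -/Lm.
by field; rewrite gamma_neq0 Lam_neq0.
Qed.

Lemma ladder_deriv_QcN y : sig.[y] != 0 -> (b m.+1).[y] != 0 ->
  Deltaf mu P Qc beta gamma c N m.+2 y != 0 ->
  (deriv (QcN m.+2)).[y] =
    xi1 mu P Qc beta gamma sig a b c N m.+2 y * (QcN m.+2).[y] +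
    eta1 mu P Qc beta gamma sig a b c N m.+2 y * (QcN m.+1).[y].
Proof.
move=> s_neq0 b_neq0 /Deltaf_numerator_neq0 D_neq0.
rewrite QcN_m2 QcN_m1 derivD derivZ !hornerE.
rewrite /xi1 /eta1 /C1f /D1f /Deltaf /B2f /= -/Ln -/Lm.
rewrite !structure_relation_at //= recurrence_prev_at.
by field; rewrite gamma_neq0 Lam_neq0 D_neq0 s_neq0 b_neq0.
Qed.

Lemma ladder_deriv_QcN_prev y : sig.[y] != 0 -> (b m.+1).[y] != 0 ->
  Deltaf mu P Qc beta gamma c N m.+2 y != 0 ->
  (deriv (QcN m.+1)).[y] =
    xi2 mu P Qc beta gamma sig a b c N m.+2 y * (QcN m.+2).[y] +
    eta2 mu P Qc beta gamma sig a b c N m.+2 y * (QcN m.+1).[y].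
Proof.
move=> s_neq0 b_neq0 /Deltaf_numerator_neq0 D_neq0.
rewrite QcN_m2 QcN_m1 derivD derivZ !hornerE.
rewrite /xi2 /eta2 /C2f /D2f /Deltaf /B2f /= -/Ln -/Lm.
rewrite recurrence_prev_deriv_at !structure_relation_at //= recurrence_prev_at.
by field; rewrite gamma_neq0 Lam_neq0 D_neq0 s_neq0 b_neq0.
Qed.

Lemma ladder_deriv_QcN_near x : sig.[x] != 0 -> (b m.+1).[x] != 0 ->
  Deltaf mu P Qc beta gamma c N m.+2 x != 0 ->
  \forall y \near x, (deriv (QcN m.+2)).[y] =
    xi1 mu P Qc beta gamma sig a b c N m.+2 y * (QcN m.+2).[y] +
    eta1 mu P Qc beta gamma sig a b c N m.+2 y * (QcN m.+1).[y].
Proof.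
move=> sig_neq0 b_neq0 Delta_neq0.
have dhorner (p : {poly R}) : derivable (horner p) x 1 by exact: derivable_horner.
have dDelta : derivable (Deltaf mu P Qc beta gamma c N m.+2) x 1.
  exact: derivable_Deltaf.
have sig_near := near_neq0 (dhorner sig) sig_neq0.
have b_near := near_neq0 (dhorner (b m.+1)) b_neq0.
have Delta_near := near_neq0 dDelta Delta_neq0.
near=> y; apply: ladder_deriv_QcN => //; by near: y.
Unshelve. all: by end_near.
Qed.
End Ladder.

Lemma not_msupport_ball (R : realType) (mu : {measure set (measurableTypeR R) -> \bar R}) c :
  ~ msupport mu c -> exists2 e : R, 0 < e & mu `](c - e), (c + e)[%classic = 0%E.
Proof.
move=> c_notin; apply: contrapT => no_ball; apply: c_notin => e e_gt0.
by rewrite lt0e measure_ge0 andbT; apply: contra_notN no_ball => /eqP; exists e.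
Qed.

Theorem theorem5 (R : realType) (mu : {measure set (measurableTypeR R) -> \bar R})
  (P : nat -> {poly R}) (beta gamma : nat -> R) (sig : {poly R})
  (a b : nat -> {poly R}) (c N : R) (Qc QcN : nat -> {poly R})
  (n : nat) (x : R) :
  (* mu absolutely continuous w.r.t. Lebesgue measure *)
  mu `<< (@lebesgue_measure R) ->
  (* finite moments *)
  (forall k : nat, mu.-integrable setT (fun t : R => (t ^+ k)%:E)) ->
  (* support E infinite, c outside E, N > 0 *)
  infinite_set (msupport mu) ->
  ~ msupport mu c ->
  0 < N ->
  (* monic OPS for mu, three-term recurrence *)
  is_MOPS (mu_form mu) P ->
  (forall k, 'X * P k = P k.+1 + beta k *: P k + gamma k *: Pprev P k) ->
  (* semi-classical structure relation, degrees independent of n *)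
  (exists d : nat, forall k, (size (a k) <= d)%N /\ (size (b k) <= d)%N) ->
  (forall k, sig * deriv (P k) = a k * P k + b k * Pprev P k) ->
  (* the Geronimus-type MOPS *)
  is_MOPS (geron_form mu c) Qc ->
  is_MOPS (geronN_form mu c N) QcN ->
  (* all quantities are defined *)
  (2 <= n)%N ->
  (P n.-1).[c] != 0 -> (P n.-2).[c] != 0 ->
  Fst mu P n.-1 c != 0 -> Fst mu P n.-2 c != 0 ->
  1 + N * Bc mu P Qc c n != 0 -> 1 + N * Bc mu P Qc c n.-1 != 0 ->
  gamma n.-1 != 0 ->
  Lam mu P Qc c N n.-1 != 0 ->
  sig.[x] != 0 ->
  (b n.-1).[x] != 0 ->
  Deltaf mu P Qc beta gamma c N n x != 0 ->
  eta1 mu P Qc beta gamma sig a b c N n x != 0 ->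
  (deriv (deriv (QcN n))).[x]
    + RRf mu P Qc beta gamma sig a b c N n x * (deriv (QcN n)).[x]
    + SSf mu P Qc beta gamma sig a b c N n x * (QcN n).[x] = 0.
Proof.
move=> _ moments _ c_notin _ HP Hrec _ Hstr HQc HQcN n_ge2 P1c P2c F1c F2c den1 den2
  gamma_neq0 Lam_neq0 sig_neq0 b_neq0 Delta_neq0 eta1_neq0.
case: n => [|[|m]] // in n_ge2 P1c P2c F1c F2c den1 den2 gamma_neq0 Lam_neq0 b_neq0
  Delta_neq0 eta1_neq0 *.
have [e e_gt0 mu_ball0] := not_msupport_ball c_notin.
have QcN_m2 := QcN_kernel_form moments e_gt0 mu_ball0 HP Hrec HQc HQcN P1c F1c den1.
have QcN_m1 := QcN_kernel_form moments e_gt0 mu_ball0 HP Hrec HQc HQcN P2c F2c den2.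
apply: ladder_second_order eta1_neq0 _ _.
- exact: derivable_xi1.
- exact: derivable_eta1.
- exact: (ladder_deriv_QcN_near Hstr Hrec QcN_m2 QcN_m1).
- exact: (ladder_deriv_QcN_prev Hstr Hrec QcN_m2 QcN_m1).
Qed.
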